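(* Let $\mathscr X=[0,1]^4$ with the Euclidean norm $\|\cdot\|_2$. Let $\mathbf x_1=(1/2,1/2,1/2,1/2)$ and, for $n\ge1$, let $\mathbf x_{n+1}$ be any point of $\mathrm{Arg}\max_{\mathbf x\in\mathscr X}\min_{1\le i\le n}\|\mathbf x-\mathbf x_i\|_2$, with $\mathbf X_n=\{\mathbf x_1,\ldots,\mathbf x_n\}$. Let $n_m=(2^m+1)^4+2^{4m}$, $\gamma_m=2^{-m}$, $\ell_m=6\cdot2^{2m}(2^m+1)^2$, and for $n\ge17$ let $m=m(n)$ be the unique integer with $n_m\le n<n_{m+1}$. Then: - for $n=n_m$: $\mathsf{SR}(\mathbf X_n)=\gamma_m/2$, $\mathsf{CR}(\mathbf X_n)=\gamma_m\sqrt2/2$, $\mathsf{MR}(\mathbf X_n)=\sqrt2$; - for $n=n_m+1,\ldots,n_m+\ell_m-1$: $\mathsf{SR}(\mathbf X_n)=\gamma_m/(2\sqrt2)$, $\mathsf{CR}(\mathbf X_n)=\gamma_m\sqrt2/2$, $\mathsf{MR}(\mathbf X_n)=2$; - for $n=n_m+\ell_m$: $\mathsf{SR}(\mathbf X_n)=\gamma_m/(2\sqrt2)$, $\mathsf{CR}(\mathbf X_n)=\gamma_m/2$, $\mathsf{MR}(\mathbf X_n)=\sqrt2$; - for $n=n_m+\ell_m+1,\ldots,n_{m+1}-1$: $\mathsf{SR}(\mathbf X_n)=\gamma_m/4$, $\mathsf{CR}(\mathbf X_n)=\gamma_m/2$, $\mathsf{MR}(\mathbf X_n)=2$.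
   Context: Fill distance $\mathsf{CR}(\mathbf X_n)=\sup_{\mathbf x\in\mathscr X}\min_{i\le n}\|\mathbf x-\mathbf x_i\|_2$; separation radius $\mathsf{SR}(\mathbf X_n)=\tfrac12\min_{i\ne j\le n}\|\mathbf x_i-\mathbf x_j\|_2$; mesh-ratio $\mathsf{MR}(\mathbf X_n)=\mathsf{CR}(\mathbf X_n)/\mathsf{SR}(\mathbf X_n)$. *)

From HB Require Import structures.
From mathcomp Require Import all_boot all_order all_algebra.
From mathcomp Require Import all_classical all_reals.
Set Implicit Arguments. Unset Strict Implicit. Unset Printing Implicit Defensive.
Import Order.TTheory GRing.Theory Num.Theory.
Local Open Scope ring_scope.
Local Open Scope classical_set_scope.

Definition pt (R : realType) := 'I_4 -> R.

Definition dist2 (R : realType) (x y : pt R) : R :=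
  Num.sqrt (\sum_(k < 4) (x k - y k) ^+ 2).

Definition cube (R : realType) : set (pt R) :=
  [set y | forall k, 0 <= y k <= 1].

Definition centre (R : realType) : pt R := fun _ => 2^-1.

Definition mindist (R : realType) (x : nat -> pt R) (n : nat) (y : pt R) : R :=
  inf [set d | exists i, (1 <= i <= n)%N /\ d = dist2 y (x i)].

Definition CR (R : realType) (x : nat -> pt R) (n : nat) : R :=
  sup [set d | exists y, cube y /\ d = mindist x n y].

Definition SR (R : realType) (x : nat -> pt R) (n : nat) : R :=
  2^-1 * inf [set d | exists i j, (1 <= i <= n)%N /\ (1 <= j <= n)%N
                                  /\ i <> j /\ d = dist2 (x i) (x j)].

Definition MR (R : realType) (x : nat -> pt R) (n : nat) : R := CR x n / SR x n.

Definition greedy_seq (R : realType) (x : nat -> pt R) : Prop :=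
  x 1%N = centre R /\
  forall n, (1 <= n)%N ->
    cube (x n.+1) /\ forall y, cube y -> mindist x n y <= mindist x n (x n.+1).

Definition n_ (m : nat) : nat := ((2 ^ m + 1) ^ 4 + 2 ^ (4 * m))%N.
Definition l_ (m : nat) : nat := (6 * 2 ^ (2 * m) * (2 ^ m + 1) ^ 2)%N.
Definition gamma (R : realType) (m : nat) : R := (2 ^+ m)^-1.

(* The greedy points fill [0,1]^4 level by level.  After n_m points the design
   is the lattice of mesh gamma_m in the cube together with the centres of its
   cells (at level 0: the centre, then the 16 vertices).  Its holes are then the
   centres of the 2-faces of the cells, at distance gamma_m sqrt 2 / 2; the greedy
   rule picks these l_m points one after the other, so the fill distance stays
   put while the separation distance is half of it.  After them the holes are the
   centres of the edges, of the 3-faces and of the cells of the halved lattice, at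
   distance gamma_m / 2, and adding them gives level m + 1.  Each phase is an
   instance of one fact: if the candidate points are at least r apart from each
   other and from the current points, every point of the cube is within r of the
   current points, and every point at distance >= r from them is a candidate,
   then the greedy rule adds exactly the candidates.  Separation and covering are
   checked on the grid of mesh gamma_m / 4, where each class of points is given by
   the residues mod 4 of the integer coordinates. *)

From mathcomp Require Import all_boot all_order all_algebra.
From mathcomp Require Import all_classical all_reals.
From mathcomp Require Import zify ring lra.
Set Implicit Arguments.
Unset Strict Implicit.
Unset Printing Implicit Defensive.
Import Order.TTheory GRing.Theory Num.Theory.
Local Open Scope ring_scope.

Section FillAndSeparation.
Variable R : realType.
Implicit Types (x : nat -> pt R) (r : R) (n : nat).

Lemma sup_eq_max (E : set R) s : E s -> (forall e, E e -> e <= s) -> sup E = s.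
Proof.
move=> Es ub; apply/le_anti/andP; split; first by apply: ge_sup; [exists s | exact: ub].
by apply: (ub_le_sup _ Es); exists s.
Qed.

Lemma inf_eq_min (E : set R) s : E s -> (forall e, E e -> s <= e) -> inf E = s.
Proof.
move=> Es lb; apply/le_anti/andP; split; first by apply: (ge_inf _ Es); exists s.
by apply: lb_le_inf; [exists s | exact: lb].
Qed.

Lemma dist2_ge0 (a b : pt R) : 0 <= dist2 a b.
Proof. exact: sqrtr_ge0. Qed.

Lemma dist2C (a b : pt R) : dist2 a b = dist2 b a.
Proof. by congr Num.sqrt; apply: eq_bigr => k _; rewrite -sqrrN opprB. Qed.

Lemma dist2xx (a : pt R) : dist2 a a = 0.
Proof. by rewrite /dist2 big1 ?sqrtr0 // => k _; rewrite subrr expr0n. Qed.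

Lemma dist2_gt0_neq (a b : pt R) r : 0 < r -> r <= dist2 a b -> a <> b.
Proof. by move=> r0 rab eab; move: (lt_le_trans r0 rab); rewrite eab dist2xx ltxx. Qed.

Lemma dist2_geE (a b : pt R) r : 0 <= r ->
  (r <= dist2 a b) = (r ^+ 2 <= \sum_(k < 4) (a k - b k) ^+ 2).
Proof.
move=> r_ge0; rewrite -[r in LHS](ger0_norm r_ge0) -sqrtr_sqr ler_sqrt //.
by apply: sumr_ge0 => k _; exact: sqr_ge0.
Qed.

Lemma dist2_leE (a b : pt R) r : 0 <= r ->
  (dist2 a b <= r) = (\sum_(k < 4) (a k - b k) ^+ 2 <= r ^+ 2).
Proof. by move=> r_ge0; rewrite -[r in LHS](ger0_norm r_ge0) -sqrtr_sqr ler_sqrt // sqr_ge0. Qed.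

Lemma mindist_le x n y i : (1 <= i <= n)%N -> mindist x n y <= dist2 y (x i).
Proof.
move=> Hi; apply: (ge_inf _ (ex_intro _ i (conj Hi erefl))).
by exists 0 => d [j [_ ->]]; exact: dist2_ge0.
Qed.

Lemma mindist_ge x n y d : (1 <= n)%N ->
  (forall i, (1 <= i <= n)%N -> d <= dist2 y (x i)) -> d <= mindist x n y.
Proof.
move=> n_gt0 H; apply: lb_le_inf; last by move=> e [j [Hj ->]]; exact: H.
by exists (dist2 y (x 1%N)), 1%N; split; rewrite ?lexx ?n_gt0.
Qed.

Lemma CR_eq x n r : (exists2 y, cube y & mindist x n y = r) ->
  (forall y, cube y -> mindist x n y <= r) -> CR x n = r.
Proof.
move=> [y cy <-] H; apply: sup_eq_max; first by exists y.
by move=> e [z [cz ->]]; rewrite H.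
Qed.

Definition separated x n r := forall i j, (1 <= i <= n)%N -> (1 <= j <= n)%N ->
  i <> j -> r <= dist2 (x i) (x j).

Lemma separated_le x n r r' : r' <= r -> separated x n r -> separated x n r'.
Proof. by move=> r'r sep i j Hi Hj ij; apply: le_trans r'r (sep i j Hi Hj ij). Qed.

Lemma SR_eq x n r : separated x n r ->
  (exists i j, [/\ (1 <= i <= n)%N, (1 <= j <= n)%N, i <> j & dist2 (x i) (x j) = r]) ->
  SR x n = r / 2.
Proof.
move=> sep [i [j [Hi Hj Hij Er]]]; subst r; rewrite /SR mulrC; congr (_ * _).
apply: inf_eq_min; first by exists i, j.
by move=> e [a [b [Ha [Hb [Hab ->]]]]]; exact: sep.
Qed.

End FillAndSeparation.

Section GreedyPhase.
Variables (R : realType) (x : nat -> pt R) (k L : nat) (r : R).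
Variables (B : set (pt R)) (h : 'I_L -> pt R).
Hypotheses (x_greedy : greedy_seq x) (k_gt0 : (0 < k)%N) (r_gt0 : 0 < r).
Hypothesis B_first : forall y, B y <-> exists i, (1 <= i <= k)%N /\ x i = y.
Hypothesis B_sep : separated x k r.
Hypothesis h_inj : injective h.
Hypothesis h_cube : forall t, cube (h t).
Hypothesis h_far_B : forall t b, B b -> r <= dist2 (h t) b.
Hypothesis h_sep : forall t t', t <> t' -> r <= dist2 (h t) (h t').
Hypothesis B_covers : forall y, cube y -> exists b, B b /\ dist2 y b <= r.
Hypothesis far_B_in_h : forall y, cube y -> (forall b, B b -> r <= dist2 y b) ->
  exists t, h t = y.

Lemma mindist_le_radius n y : (k <= n)%N -> cube y -> mindist x n y <= r.
Proof.
move=> kn cy; have [b [/B_first [i [Hi <-]] yb]] := B_covers cy.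
by apply: le_trans yb; apply: mindist_le; lia.
Qed.

Lemma x_in_B i : (1 <= i <= k)%N -> B (x i).
Proof. by move=> Hi; apply/B_first; exists i. Qed.

Definition phase_inv j :=
  (forall i, (k < i <= k + j)%N -> exists t, x i = h t) /\ separated x (k + j) r.

Lemma exists_unvisited j : (j < L)%N -> phase_inv j ->
  exists t, forall i, (1 <= i <= k + j)%N -> x i <> h t.
Proof.
move=> jL [x_h _]; apply: contrapT => all_visited.
have visited t : exists s : 'I_j, x (k + s.+1)%N = h t.
  apply: contrapT => not_t; apply: all_visited; exists t => i Hi xi.
  have ki : (k < i)%N.
    rewrite ltnNge; apply/negP => ik; have Bi : B (x i) by apply: x_in_B; lia.
    exact: dist2_gt0_neq r_gt0 (h_far_B t Bi) (esym xi).
  have s_lt : (i - k.+1 < j)%N by lia.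
  by apply: not_t; exists (Ordinal s_lt); rewrite -xi /=; congr x; lia.
have [g Hg] := choice visited.
have g_inj : injective g by move=> t t' E; apply: h_inj; rewrite -Hg -(Hg t') E.
by have := leq_card g g_inj; rewrite !card_ord; lia.
Qed.

Lemma mindist_unvisited j t : phase_inv j ->
  (forall i, (1 <= i <= k + j)%N -> x i <> h t) -> r <= mindist x (k + j) (h t).
Proof.
move=> [x_h _] new_t; apply: mindist_ge; first by lia.
move=> i Hi; case: (leqP i k) => ik; first by apply: h_far_B; apply: x_in_B; lia.
have [t' xt'] := x_h i (ltac:(lia)); rewrite xt'; apply: h_sep => tt'.
by apply: (new_t i Hi); rewrite xt' tt'.
Qed.

Lemma phase_invS j : (j < L)%N -> phase_inv j -> phase_inv j.+1.
Proof.
move=> jL inv_j; have [x_h x_sep] := inv_j.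
have [t new_t] := exists_unvisited jL inv_j.
have [_ x_max] := x_greedy.2 (k + j)%N (ltac:(lia)).
have far_next : r <= mindist x (k + j) (x (k + j).+1).
  exact: le_trans (mindist_unvisited inv_j new_t) (x_max _ (h_cube t)).
have next_far i : (1 <= i <= k + j)%N -> r <= dist2 (x (k + j).+1) (x i).
  by move=> Hi; apply: le_trans far_next (mindist_le _ _ Hi).
have [t' ht'] : exists t', h t' = x (k + j).+1.
  apply: far_B_in_h; first exact: (x_greedy.2 (k + j)%N (ltac:(lia))).1.
  by move=> b /B_first [i [Hi <-]]; apply: next_far; lia.
split=> [i Hi|i i' Hi Hi' ii'].
  by case: (ltnP i (k + j.+1)) => ?; [apply: x_h; lia | exists t'; rewrite ht'; congr x; lia].
case: (ltnP i (k + j).+1) => ?; case: (ltnP i' (k + j).+1) => ?.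
- by apply: x_sep => //; lia.
- have -> : i' = (k + j).+1 by lia.
  by rewrite dist2C; apply: next_far; lia.
- have -> : i = (k + j).+1 by lia.
  by apply: next_far; lia.
- by lia.
Qed.

Lemma phase_inv_all j : (j <= L)%N -> phase_inv j.
Proof.
elim: j => [|j IH] jL; first by split=> [i|]; rewrite ?addn0 //; lia.
by apply: phase_invS (IH _); lia.
Qed.

Lemma phase_CR j : (j < L)%N -> CR x (k + j) = r.
Proof.
move=> jL; have inv_j := phase_inv_all (ltnW jL).
have [t new_t] := exists_unvisited jL inv_j.
apply: CR_eq => [|y cy]; last exact: mindist_le_radius (leq_addr _ _) cy.
exists (h t) => //; apply/le_anti/andP; split; last exact: mindist_unvisited.
exact: mindist_le_radius (leq_addr _ _) (h_cube t).
Qed.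

Lemma phase_SR j : (0 < j <= L)%N -> SR x (k + j) = r / 2.
Proof.
move=> jL; have [x_h x_sep] := phase_inv_all (ltac:(lia) : (j <= L)%N).
have [t xt] := x_h k.+1 (ltac:(lia)).
have [b [/B_first [i [Hi <-]] tb]] := B_covers (h_cube t).
apply: SR_eq => //; exists k.+1, i; split; try lia.
by rewrite xt; apply/le_anti; rewrite tb h_far_B //; apply: x_in_B.
Qed.

Lemma phase_sep : separated x (k + L) r.
Proof. by have [] := phase_inv_all (leqnn L). Qed.

Lemma phase_points y :
  (B y \/ exists t, h t = y) <-> exists i, (1 <= i <= k + L)%N /\ x i = y.
Proof.
have [x_h x_sep] := phase_inv_all (leqnn L).
split=> [[/B_first [i [Hi <-]]|[t <-]]|[i [Hi <-]]].
- by exists i; split=> //; lia.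
- have later (s : 'I_L) : exists t', x (k + s.+1)%N = h t'.
    by apply: x_h; have := ltn_ord s; lia.
  have [f Hf] := choice later.
  have f_inj : injective f.
    move=> s s' fss'; apply: ord_inj; apply: contrapT => ss'.
    have := ltn_ord s; have := ltn_ord s' => ? ?.
    have := x_sep (k + s.+1)%N (k + s'.+1)%N (ltac:(lia)) (ltac:(lia)) (ltac:(lia)).
    by move/(dist2_gt0_neq r_gt0); apply; rewrite Hf (Hf s') fss'.
  have /codomP [s ->] := injF_onto f_inj t.
  by exists (k + s.+1)%N; split; [have := ltn_ord s; lia | exact: Hf].
- case: (leqP i k) => ik; first by left; apply: x_in_B; lia.
  by right; have [t xt] := x_h i (ltac:(lia)); exists t.
Qed.

Lemma greedy_phase :
  [/\ forall j, (j < L)%N -> CR x (k + j) = r,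
      forall j, (0 < j <= L)%N -> SR x (k + j) = r / 2,
      separated x (k + L) r &
      forall y, (B y \/ exists t, h t = y) <-> exists i, (1 <= i <= k + L)%N /\ x i = y].
Proof. by split; [exact: phase_CR | exact: phase_SR | exact: phase_sep | exact: phase_points]. Qed.

End GreedyPhase.

Section ResiduePatterns.
Local Open Scope nat_scope.

Definition i0 : 'I_4 := @Ordinal 4 0 isT.
Definition i1 : 'I_4 := @Ordinal 4 1 isT.
Definition i2 : 'I_4 := @Ordinal 4 2 isT.
Definition i3 : 'I_4 := @Ordinal 4 3 isT.

Lemma ord4P (k : 'I_4) : [\/ k = i0, k = i1, k = i2 | k = i3].
Proof.
case: k => [[|[|[|[|n]]]] Hn] //.
- by constructor 1; apply: val_inj.
- by constructor 2; apply: val_inj.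
- by constructor 3; apply: val_inj.
- by constructor 4; apply: val_inj.
Qed.

Lemma sum_ord4 (V : nmodType) (F : 'I_4 -> V) :
  (\sum_(k < 4) F k = F i0 + F i1 + F i2 + F i3)%R.
Proof.
rewrite !big_ord_recr big_ord0 /= add0r.
by congr (_ + _ + _ + _)%R; congr F; apply: val_inj.
Qed.

(* A pattern is a boolean condition on the residues mod 4 of the four
   coordinates of an integer code [v]; on the grid of mesh [1 / (4 * 2 ^ m)]
   [level_pat] describes the points of the lattice [2 ^ -m * Z ^ 4] and the
   centres of its cells, [face_pat] the centres of the 2-faces of the cells,
   and [refine_pat] the remaining points of the next level: the centres of the
   edges, of the 3-faces and of the cells of the halved lattice. *)
Definition pattern := nat -> nat -> nat -> nat -> bool.

Definition has_pattern (F : pattern) (v : 'I_4 -> nat) : bool :=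
  F (v i0 %% 4) (v i1 %% 4) (v i2 %% 4) (v i3 %% 4).

Definition corner_pat : pattern := fun a b c d => [&& a == 0, b == 0, c == 0 & d == 0].
Definition centre_pat : pattern := fun a b c d => [&& a == 2, b == 2, c == 2 & d == 2].
Definition level_pat : pattern := fun a b c d => corner_pat a b c d || centre_pat a b c d.
Definition count2 (a b c d : nat) : nat := (a == 2) + (b == 2) + (c == 2) + (d == 2).
Definition even_pat : pattern := fun a b c d => [&& ~~ odd a, ~~ odd b, ~~ odd c & ~~ odd d].
Definition odd_pat : pattern := fun a b c d => [&& odd a, odd b, odd c & odd d].
Definition face_pat : pattern := fun a b c d => even_pat a b c d && (count2 a b c d == 2).
Definition covered_pat : pattern := fun a b c d => level_pat a b c d || face_pat a b c d.
Definition refine_pat : pattern := fun a b c d =>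
  even_pat a b c d && odd (count2 a b c d) || odd_pat a b c d.

Definition res4 := iota 0 4.

Definition all_res (P : pattern) : bool :=
  all (fun a => all (fun b => all (fun c => all (P a b c) res4) res4) res4) res4.

Lemma all_resP P :
  all_res P -> forall a b c d, a < 4 -> b < 4 -> c < 4 -> d < 4 -> P a b c d.
Proof.
have res4P n : n < 4 -> n \in res4 by rewrite mem_iota.
move=> /allP PP a b c d /res4P/PP/allP Pa /res4P/Pa/allP Pb /res4P/Pb/allP Pc /res4P.
exact: Pc.
Qed.

Lemma all_res_pattern P v : all_res P -> has_pattern P v.
Proof. by move/all_resP; apply; rewrite ltn_pmod. Qed.

Definition all_bool4 (P : bool -> bool -> bool -> bool -> bool) : bool :=
  all (fun a => all (fun b => all (fun c => all (P a b c) [:: true; false])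
    [:: true; false]) [:: true; false]) [:: true; false].

Lemma all_bool4P P : all_bool4 P -> forall a b c d, P a b c d.
Proof.
have bP (n : bool) : n \in [:: true; false] by case: n.
move=> /allP PP a b c d; move: (PP a (bP a)) => /allP /(_ b (bP b)).
by move=> /allP /(_ c (bP c)) /allP; apply.
Qed.

Definition sqgap (c c' : nat) (ne : bool) : nat :=
  if c == c' then (if ne then 16 else 0) else if odd (c + c') then 1 else 4.

Lemma sqgapP (R : realDomainType) (a b : nat) :
  ((sqgap (a %% 4) (b %% 4) (a != b))%:R <= (a%:R - b%:R) ^+ 2 :> R)%R.
Proof.
wlog ab : a b / a <= b.
  move=> W; case: (leqP a b) => [/W//|/ltnW /W].
  by rewrite /sqgap eq_sym (eq_sym b) addnC -sqrrN opprB.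
rewrite -sqrrN opprB -natrB // -natrX ler_nat /sqgap.
case: ifP => [/eqP|/negbT] res_eq.
  case: eqVneq => [->|ab']; first by rewrite subnn.
  have : 4 <= b - a by lia.
  by rewrite /=; nia.
case: ifP => [_|/negbT par]; first by rewrite expn_gt0 subn_gt0 ltn_neqAle ab andbT; lia.
have : 2 <= b - a by lia.
by nia.
Qed.

Definition sep_check (F F' : pattern) (rho : nat) : bool :=
  all_res (fun a b c d => F a b c d ==> all_res (fun a' b' c' d' => F' a' b' c' d' ==>
    all_bool4 (fun n0 n1 n2 n3 =>
      [&& (a != a') ==> n0, (b != b') ==> n1, (c != c') ==> n2,
          (d != d') ==> n3 & [|| n0, n1, n2 | n3]] ==>
      (rho <= sqgap a a' n0 + sqgap b b' n1 + sqgap c c' n2 + sqgap d d' n3)))).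

Lemma sep_checkP (R : realDomainType) F F' rho (v v' : 'I_4 -> nat) :
  sep_check F F' rho -> has_pattern F v -> has_pattern F' v' -> v <> v' ->
  (rho%:R <= \sum_(k < 4) ((v k)%:R - (v' k)%:R) ^+ 2 :> R)%R.
Proof.
have res_lt n : n %% 4 < 4 by rewrite ltn_pmod.
move=> chk Fv Fv' vv'; have [k vk] : exists k, v k != v' k.
  apply: contrapT => all_eq; apply: vv'; apply: funext => k.
  by apply/eqP/negPn/negP => ?; apply: all_eq; exists k.
rewrite sum_ord4; have gap k' := sqgapP R (v k') (v' k').
apply: le_trans (lerD (lerD (lerD (gap i0) (gap i1)) (gap i2)) (gap i3)).
rewrite -!natrD ler_nat.
have /implyP /(_ Fv) chk' : F _ _ _ _ ==> _ :=
  all_resP chk (res_lt (v i0)) (res_lt (v i1)) (res_lt (v i2)) (res_lt (v i3)).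
have /implyP /(_ Fv') : F' _ _ _ _ ==> _ :=
  all_resP chk' (res_lt (v' i0)) (res_lt (v' i1)) (res_lt (v' i2)) (res_lt (v' i3)).
move=> /all_bool4P /(_ (v i0 != v' i0) (v i1 != v' i1) (v i2 != v' i2) (v i3 != v' i3)).
move=> /implyP; apply.
have res_ne (a b : nat) : (a %% 4 != b %% 4) ==> (a != b).
  by apply/implyP; apply: contra => /eqP ->.
rewrite !res_ne /=.
by case: (ord4P k) vk => -> ->; rewrite ?orbT.
Qed.

Definition disjoint_pat (F F' : pattern) : bool :=
  all_res (fun a b c d => ~~ (F a b c d && F' a b c d)).

Lemma disjoint_patP F F' v : disjoint_pat F F' -> has_pattern F v -> ~~ has_pattern F' v.
Proof. by move=> /(all_res_pattern v); rewrite /has_pattern; case: (F _ _ _ _). Qed.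

Definition phase_checks (FB FH : pattern) (rho : nat) : bool :=
  [&& sep_check FH FB rho, sep_check FH FH rho & disjoint_pat FH FB].

Lemma corner_phase_checks : phase_checks centre_pat corner_pat 16.
Proof. by vm_compute. Qed.

Lemma face_phase_checks : phase_checks level_pat face_pat 8.
Proof. by vm_compute. Qed.

Lemma refine_phase_checks : phase_checks covered_pat refine_pat 4.
Proof. by vm_compute. Qed.

Definition code_count2 (v : 'I_4 -> nat) : nat :=
  count2 (v i0 %% 4) (v i1 %% 4) (v i2 %% 4) (v i3 %% 4).

Lemma odd_code_count2 v : odd (code_count2 v) =
  (v i0 %% 4 == 2) (+) (v i1 %% 4 == 2) (+) (v i2 %% 4 == 2) (+) (v i3 %% 4 == 2).
Proof. by rewrite /code_count2 /count2 !oddD !oddb. Qed.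

Lemma even_code v : (forall k, ~~ odd (v k)) -> has_pattern even_pat v.
Proof. by move=> v_even; rewrite /has_pattern /even_pat !odd_mod ?v_even. Qed.

Lemma odd_code v : (forall k, odd (v k)) -> has_pattern odd_pat v.
Proof. by move=> v_odd; rewrite /has_pattern /odd_pat !odd_mod ?v_odd. Qed.

Lemma level_code_even v : has_pattern level_pat v -> has_pattern even_pat v.
Proof.
have chk : all_res (fun a b c d => level_pat a b c d ==> even_pat a b c d) by vm_compute.
by move/implyP: (all_res_pattern v chk : has_pattern level_pat v ==> has_pattern even_pat v).
Qed.

Lemma even_code_covered v :
  has_pattern even_pat v -> ~~ odd (code_count2 v) -> has_pattern covered_pat v.
Proof.
have chk : all_res (fun a b c d =>
  even_pat a b c d && ~~ odd (count2 a b c d) ==> covered_pat a b c d) by vm_compute.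
move=> v_even v_count; move/implyP: (all_res_pattern v chk : has_pattern even_pat v &&
  ~~ odd (code_count2 v) ==> has_pattern covered_pat v).
by apply; rewrite v_even v_count.
Qed.

Lemma level_code_halve v : has_pattern level_pat (fun k => 2 * v k) =
  has_pattern covered_pat v || has_pattern refine_pat v.
Proof.
have chk : all_res (fun a b c d =>
  level_pat (2 * (a %% 2)) (2 * (b %% 2)) (2 * (c %% 2)) (2 * (d %% 2))
    == covered_pat a b c d || refine_pat a b c d) by vm_compute.
have res2 n : (2 * n) %% 4 = 2 * (n %% 4 %% 2) by lia.
have /eqP halve := (all_res_pattern v chk : level_pat
  (2 * (v i0 %% 4 %% 2)) (2 * (v i1 %% 4 %% 2)) (2 * (v i2 %% 4 %% 2)) (2 * (v i3 %% 4 %% 2))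
  == has_pattern covered_pat v || has_pattern refine_pat v).
by rewrite -halve /has_pattern !res2.
Qed.

End ResiduePatterns.

Section GridCovering.
Variable R : realType.
Implicit Types (M N : nat) (p : 'I_4 -> R) (v w : 'I_4 -> nat).

Lemma sum_ord4_tight (f : 'I_4 -> R) c :
  (forall k, f k <= c) -> 4 * c <= \sum_(k < 4) f k -> forall k, f k = c.
Proof.
move=> f_le sum_ge k; have gap_ge0 i : true -> 0 <= c - f i by rewrite subr_ge0.
have gap_sum : \sum_(i < 4) (c - f i) = 0.
  apply/le_anti; rewrite sumr_ge0 // andbT.
  by rewrite sumrB sumr_const card_ord subr_le0 -mulr_natl.
apply/eqP; rewrite eq_sym -subr_eq0; apply/eqP; exact: psumr_eq0P gap_ge0 gap_sum k isT.
Qed.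

Lemma sum_ord4_le (f : 'I_4 -> R) c : (forall k, f k <= c) -> \sum_(k < 4) f k <= 4 * c.
Proof.
move=> f_le; apply: le_trans (ler_sum _ (fun k _ => f_le k)) _.
by rewrite sumr_const card_ord mulr_natl.
Qed.

Definition even_floor K (u : R) : nat := (2 * minn (Num.truncn (u / 2)) K.-1)%N.

Lemma even_floorP K u : (0 < K)%N -> 0 <= u <= (2 * K)%:R ->
  [/\ ~~ odd (even_floor K u), (even_floor K u + 2 <= 2 * K)%N &
      (even_floor K u)%:R <= u <= (even_floor K u + 2)%:R].
Proof.
move=> K_gt0 /andP[u_ge0 u_le]; rewrite /even_floor mul2n odd_double -mul2n.
have := truncn_itv (divr_ge0 u_ge0 (ler0n _ 2)).
move: (Num.truncn (u / 2)) => t /andP[t_le t_gt]; rewrite -[t.+1]addn1 natrD in t_gt.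
rewrite natrM in u_le; split => //; first by lia.
have [tK|Kt] := leqP t K.-1.
  by rewrite natrD natrM; apply/andP; split; lra.
have Kt' : (K%:R : R) <= t%:R by rewrite ler_nat; lia.
have KE : (K%:R : R) = K.-1%:R + 1 by rewrite -[in LHS](prednK K_gt0) -addn1 natrD.
by rewrite natrD natrM; apply/andP; split; lra.
Qed.

Lemma bracket_sqr (a u : R) : a <= u <= a + 2 ->
  (u - a) ^+ 2 + (u - (a + 2)) ^+ 2 <= 4 /\
  ((u - a) ^+ 2 + (u - (a + 2)) ^+ 2 = 4 -> u = a \/ u = a + 2).
Proof.
move=> /andP[lo hi]; split; first by nra.
move/eqP; rewrite -subr_eq0 (_ : _ - 4 = 2 * ((u - a) * (u - (a + 2)))); last by ring.
by rewrite mulf_eq0 pnatr_eq0 /= mulf_eq0 !subr_eq0 => /orP[]/eqP; auto.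
Qed.

Definition grid_code M (F : pattern) v := (forall k, (v k <= M)%N) /\ has_pattern F v.

Definition sqerr p v : R := \sum_(k < 4) (p k - (v k)%:R) ^+ 2.

(* [p] is a point of the cube scaled by [M], i.e. measured in grid units. *)
Definition covering M (FB FH : pattern) (rho : nat) := forall p,
  (forall k, 0 <= p k <= M%:R) ->
  (exists2 v, grid_code M FB v & sqerr p v <= rho%:R) /\
  ((forall v, grid_code M FB v -> rho%:R <= sqerr p v) ->
     exists2 w, grid_code M FH w & forall k, p k = (w k)%:R).

Definition even_floor_code N p k := even_floor (2 * N) (p k).

Lemma even_floor_codeP N p k : (0 < N)%N -> (forall k, 0 <= p k <= (4 * N)%:R) ->
  [/\ ~~ odd (even_floor_code N p k), (even_floor_code N p k + 2 <= 4 * N)%N &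
      (even_floor_code N p k)%:R <= p k <= (even_floor_code N p k + 2)%:R].
Proof.
move=> N_gt0 p_range; have := @even_floorP (2 * N) (p k).
by rewrite mulnA; apply; [lia | exact: p_range].
Qed.

Lemma corner_covering : covering 4 centre_pat corner_pat 16.
Proof.
move=> p p_range; pose c (k : 'I_4) := 2%N.
have c_code : grid_code 4 centre_pat c by [].
have c_err k : (p k - (c k)%:R) ^+ 2 <= 4.
  have /andP[p0 p4] := p_range k; rewrite /c; nra.
have c_err_sum : sqerr p c <= 16%:R.
  by apply: le_trans (sum_ord4_le c_err) _; lra.
split; first by exists c.
move=> /(_ c c_code) c_far.
have tight : forall k, (p k - (c k)%:R) ^+ 2 = 4.
  by apply: sum_ord4_tight c_err _; move: c_far; rewrite /sqerr; lra.
have corner_at k : exists n : nat, p k = n%:R /\ (n = 0 \/ n = 4)%N.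
  have /eqP := tight k; rewrite -subr_eq0 (_ : _ - 4 = p k * (p k - 4)); last by rewrite /c; ring.
  by rewrite mulf_eq0 subr_eq0 => /orP[/eqP-> | /eqP->]; [exists 0%N | exists 4%N]; split; auto.
have [w w_def] := choice corner_at.
exists w; last by move=> k; have [] := w_def k.
split=> [k|]; first by have [_] := w_def k; lia.
have w0 k : (w k %% 4 == 0)%N by have [_ [->|->]] := w_def k.
by rewrite /has_pattern /corner_pat !w0.
Qed.

(* Each coordinate lies between consecutive even integers, one in each residue
   class 0 and 2 mod 4; choosing them coordinatewise gives a corner code [q] and a
   centre code [q'] with [sqerr p q + sqerr p q' <= 16]. *)
Section FaceCovering.
Variables (N : nat) (p : 'I_4 -> R).
Hypotheses (N_gt0 : (0 < N)%N) (p_range : forall k, 0 <= p k <= (4 * N)%:R).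

Let a := even_floor_code N p.
Let a_bracket k :
  [/\ ~~ odd (a k), (a k + 2 <= 4 * N)%N & (a k)%:R <= p k <= (a k + 2)%:R].
Proof. exact: even_floor_codeP. Qed.
Let q k := if (a k %% 4 == 0)%N then a k else (a k + 2)%N.
Let q' k := if (a k %% 4 == 0)%N then (a k + 2)%N else a k.

Let q_res k : (q k %% 4 = 0 /\ q' k %% 4 = 2)%N.
Proof. by have [] := a_bracket k; rewrite /q /q'; case: ifP; lia. Qed.

Let q_code : grid_code (4 * N) level_pat q /\ grid_code (4 * N) level_pat q'.
Proof.
have q_le k : (q k <= 4 * N /\ q' k <= 4 * N)%N.
  by have [] := a_bracket k; rewrite /q /q'; case: ifP; lia.
have q0 k : (q k %% 4 = 0)%N by have [] := q_res k.
have q2 k : (q' k %% 4 = 2)%N by have [] := q_res k.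
split; (split=> [k|]; first by have [] := q_le k); rewrite /has_pattern /level_pat.
  by rewrite /corner_pat !q0.
by rewrite /centre_pat !q2 orbT.
Qed.

Let pair_err k : (p k - (q k)%:R) ^+ 2 + (p k - (q' k)%:R) ^+ 2 <= 4 /\
  ((p k - (q k)%:R) ^+ 2 + (p k - (q' k)%:R) ^+ 2 = 4 -> p k = (q k)%:R \/ p k = (q' k)%:R).
Proof.
have [_ _ br] := a_bracket k; rewrite natrD in br; have := bracket_sqr br; rewrite /q /q'.
by case: ifP => _; rewrite !natrD // addrC; case=> ? eq4; split=> // /eq4 []; auto.
Qed.

Let err_sum : sqerr p q + sqerr p q' <= 16.
Proof.
rewrite /sqerr -big_split /=.
by apply: le_trans (sum_ord4_le (fun k => (pair_err k).1)) _; lra.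
Qed.

Lemma face_near : exists2 v, grid_code (4 * N) level_pat v & sqerr p v <= 8%:R.
Proof.
have [q_c q'_c] := q_code.
by have [le8|gt8] := lerP (sqerr p q) 8; [exists q | exists q' => //; move: err_sum; lra].
Qed.

Lemma face_deep : (forall v, grid_code (4 * N) level_pat v -> 8%:R <= sqerr p v) ->
  exists2 w, grid_code (4 * N) face_pat w & forall k, p k = (w k)%:R.
Proof.
have [q_c q'_c] := q_code; move=> far; have far_q := far _ q_c; have far_q' := far _ q'_c.
have tight := sum_ord4_tight (fun k => (pair_err k).1) (_ : 4 * 4 <= _).
have {tight} at_q k : p k = (q k)%:R \/ p k = (q' k)%:R.
  apply: (pair_err k).2; apply: tight; rewrite big_split /=.
  by move: far_q far_q'; rewrite /sqerr; lra.
have w_ex k : exists n, p k = n%:R /\ (n = q k \/ n = q' k).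
  by case: (at_q k) => ->; [exists (q k) | exists (q' k)]; auto.
have [w w_def] := choice w_ex; exists w; last by move=> k; have [] := w_def k.
have w_res k : (w k %% 4 = 0 \/ w k %% 4 = 2)%N /\ (w k <= 4 * N)%N.
  have [q_le q'_le] := (q_c.1 k, q'_c.1 k); have [q0 q2] := q_res k.
  by have [_ [->|->]] := w_def k; split; auto.
split=> [k|]; first by have [] := w_res k.
have w_err k : (p k - (q k)%:R) ^+ 2 = 4 * ((w k %% 4 == 2)%N)%:R.
  have [q0 q2] := q_res k; have [-> [->|->]] := w_def k.
    by rewrite q0 subrr expr0n mulr0.
  by rewrite q2 mulr1 /q /q'; case: ifP => _; rewrite natrD; ring.
have count : (count2 (w i0 %% 4) (w i1 %% 4) (w i2 %% 4) (w i3 %% 4) == 2)%N.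
  have : sqerr p q = 8 by apply/le_anti; rewrite far_q andbT; move: err_sum far_q'; lra.
  by rewrite -(eqr_nat R) /count2 !natrD /sqerr sum_ord4 !w_err; move=> ?; apply/eqP; lra.
have w_even k : ~~ odd (w k %% 4) by have [[->|->] _] := w_res k.
by rewrite /has_pattern /face_pat count andbT /even_pat !w_even.
Qed.

End FaceCovering.

Lemma face_covering N : (0 < N)%N -> covering (4 * N) level_pat face_pat 8.
Proof. by move=> N_gt0 p p_range; split; [exact: face_near | exact: face_deep]. Qed.

Lemma near_far_sqr (s : R) : 0 <= s <= 1 ->
  3 * s ^+ 2 + (s - 2) ^+ 2 <= 4 /\ (3 * s ^+ 2 + (s - 2) ^+ 2 = 4 -> s = 0 \/ s = 1).
Proof.
move=> /andP[s0 s1]; split; first by nra.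
move/eqP; rewrite -subr_eq0 (_ : _ - 4 = 4 * (s * (s - 1))); last by ring.
by rewrite mulf_eq0 pnatr_eq0 /= mulf_eq0 subr_eq0 => /orP[]/eqP; auto.
Qed.

(* [w] rounds each coordinate to the nearest even integer and [flip j] moves
   coordinate [j] to the other even neighbour, which changes the parity of
   [code_count2]; so either [w] is covered or all four flips are, and then the
   errors of the flips add up to [\sum_k (3 * near_err k + far_err k) <= 16]. *)
Section RefineCovering.
Variables (N : nat) (p : 'I_4 -> R).
Hypotheses (N_gt0 : (0 < N)%N) (p_range : forall k, 0 <= p k <= (4 * N)%:R).

Let a := even_floor_code N p.
Let a_bracket k :
  [/\ ~~ odd (a k), (a k + 2 <= 4 * N)%N & (a k)%:R <= p k <= (a k + 2)%:R].
Proof. exact: even_floor_codeP. Qed.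
Let w k := if p k <= (a k)%:R + 1 then a k else (a k + 2)%N.
Let w' k := if p k <= (a k)%:R + 1 then (a k + 2)%N else a k.
Let flip j k := if k == j then w' k else w k.
Let near_err k := (p k - (w k)%:R) ^+ 2.
Let far_err k := (p k - (w' k)%:R) ^+ 2.

Let near_far k : [/\ near_err k <= 1, 3 * near_err k + far_err k <= 4,
  3 * near_err k + far_err k = 4 -> near_err k = 0 \/ near_err k = 1,
  near_err k = 0 -> p k = (w k)%:R & near_err k = 1 -> far_err k = 1 /\ p k = (a k + 1)%:R].
Proof.
have [_ _ /andP[lo hi]] := a_bracket k.
rewrite /near_err /far_err /w /w' [(a k + 2)%:R]natrD [(a k + 1)%:R]natrD in hi *.
case: (lerP (p k) ((a k)%:R + 1)) => near.
  have [le4 eq4] := @near_far_sqr (p k - (a k)%:R) (ltac:(apply/andP; split; lra)).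
  split; [nra | nra | move=> e4 | | ].
  - by have [->|->] := eq4 (ltac:(lra)); [left; rewrite expr0n | right; rewrite expr1n].
  - by move/eqP; rewrite sqrf_eq0 subr_eq0 => /eqP.
  move/eqP; rewrite sqrf_eq1 => /orP[]/eqP s1; last by lra.
  by split; [rewrite natrD opprD addrA s1; ring | lra].
have [le4 eq4] := @near_far_sqr ((a k)%:R + 2 - p k) (ltac:(apply/andP; split; lra)).
rewrite natrD -[(p k - _) ^+ 2]sqrrN opprB.
split; [nra | nra | move=> e4 | | ].
- by have [->|->] := eq4 (ltac:(lra)); [left; rewrite expr0n | right; rewrite expr1n].
- by move/eqP; rewrite sqrf_eq0 subr_eq0 => /eqP <-.
by move/eqP; rewrite sqrf_eq1 => /orP[]/eqP; lra.
Qed.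

Let w_code k : [/\ ~~ odd (w k), ~~ odd (w' k), (w k <= 4 * N)%N & (w' k <= 4 * N)%N].
Proof.
have [a_even a_le _] := a_bracket k; have a2_even : ~~ odd (a k + 2) by rewrite oddD addbF.
by rewrite /w /w'; case: ifP => _; split => //; lia.
Qed.

Let w'_res k : (w' k %% 4 == 2)%N = ~~ (w k %% 4 == 2)%N.
Proof.
have a_res : (a k %% 4 = 0 \/ a k %% 4 = 2)%N by have [] := a_bracket k; lia.
by rewrite /w /w'; case: ifP => _; rewrite -(modnDml (a k) 2 4); case: a_res => ->.
Qed.

Let err_w : sqerr p w = near_err i0 + near_err i1 + near_err i2 + near_err i3.
Proof. by rewrite /sqerr sum_ord4. Qed.

Let err_flip j : sqerr p (flip j) = sqerr p w - near_err j + far_err j.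
Proof.
rewrite /sqerr !sum_ord4 /near_err /far_err.
by case: (ord4P j) => ->; rewrite /flip /=; ring.
Qed.

Let w_covered : ~~ odd (code_count2 w) -> grid_code (4 * N) covered_pat w.
Proof.
move=> w_count; split=> [k|]; first by have [] := w_code k.
by apply: even_code_covered w_count; apply: even_code => k; have [] := w_code k.
Qed.

Let flip_covered j : odd (code_count2 w) -> grid_code (4 * N) covered_pat (flip j).
Proof.
move=> w_count; split=> [k|]; first by have [_ _ ? ?] := w_code k; rewrite /flip; case: ifP.
apply: even_code_covered.
  by apply: even_code => k; have [? ? _ _] := w_code k; rewrite /flip; case: ifP.
move: w_count; rewrite !odd_code_count2; case: (ord4P j) => ->; rewrite /flip /= w'_res;
  by case: (_ == 2)%N; case: (_ == 2)%N; case: (_ == 2)%N; case: (_ == 2)%N.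
Qed.

Let odd_point_code : (forall k, near_err k = 1) ->
  exists2 u, grid_code (4 * N) refine_pat u & forall k, p k = (u k)%:R.
Proof.
move=> err1; exists (fun k => a k + 1)%N; last first.
  by move=> k; have [_ _ _ _ /(_ (err1 k)) []] := near_far k.
split=> [k|]; first by have [] := a_bracket k; lia.
rewrite /has_pattern /refine_pat; apply/orP; right; apply: (@odd_code (fun k => a k + 1)%N) => k.
by have [] := a_bracket k; rewrite oddD addbT.
Qed.

Lemma refine_near : exists2 v, grid_code (4 * N) covered_pat v & sqerr p v <= 4%:R.
Proof.
have bounds k := near_far k; have [? ? _ _ _] := bounds i0; have [? ? _ _ _] := bounds i1.
have [? ? _ _ _] := bounds i2; have [? ? _ _ _] := bounds i3.
have [w_count|w_count] := boolP (odd (code_count2 w)); last first.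
  by exists w; [exact: w_covered | rewrite err_w; lra].
have [j j_le] : exists j, sqerr p (flip j) <= 4.
  apply: contrapT => none; have gt j : 4 < sqerr p (flip j).
    by rewrite ltNge; apply/negP => le; apply: none; exists j.
  by have := gt i0; have := gt i1; have := gt i2; have := gt i3; rewrite !err_flip err_w; lra.
by exists (flip j); [exact: flip_covered | ].
Qed.

Lemma refine_deep : (forall v, grid_code (4 * N) covered_pat v -> 4%:R <= sqerr p v) ->
  exists2 u, grid_code (4 * N) refine_pat u & forall k, p k = (u k)%:R.
Proof.
move=> far; have al_le k : near_err k <= 1 by have [] := near_far k.
have [w_count|w_count] := boolP (odd (code_count2 w)); last first.
  apply: odd_point_code; apply: sum_ord4_tight al_le _.
  by have := far _ (w_covered w_count); rewrite err_w sum_ord4; lra.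
have sum_le k : 3 * near_err k + far_err k <= 4 by have [] := near_far k.
have tight : forall k, 3 * near_err k + far_err k = 4.
  apply: sum_ord4_tight sum_le _; rewrite sum_ord4.
  have far_flip j := far _ (flip_covered j w_count).
  have := far_flip i0; have := far_flip i1; have := far_flip i2; have := far_flip i3.
  by rewrite !err_flip err_w; lra.
have al01 k : near_err k = 0 \/ near_err k = 1 by have [_ _ /(_ (tight k))] := near_far k.
have [[j al_j]|no_one] := pselect (exists j, near_err j = 1).
  apply: odd_point_code; apply: sum_ord4_tight al_le _.
  have [_ _ _ _ /(_ al_j) [be_j _]] := near_far j.
  by have := far _ (flip_covered j w_count); rewrite err_flip al_j be_j err_w sum_ord4; lra.
have al0 k : near_err k = 0 by case: (al01 k) => // al1; exfalso; apply: no_one; exists k.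
exists w; last by move=> k; have [_ _ _ /(_ (al0 k))] := near_far k.
split=> [k|]; first by have [] := w_code k.
rewrite /has_pattern /refine_pat; apply/orP; left; apply/andP; split; last exact: w_count.
by apply: (@even_code w) => k; have [] := w_code k.
Qed.

End RefineCovering.

Lemma refine_covering N : (0 < N)%N -> covering (4 * N) covered_pat refine_pat 4.
Proof. by move=> N_gt0 p p_range; split; [exact: refine_near | exact: refine_deep]. Qed.

End GridCovering.

Section GridEnumeration.
Variable R : realType.
Implicit Types (M : nat) (F : pattern) (v : 'I_4 -> nat).

Definition grid_pt M v : pt R := fun k => (v k)%:R / M%:R.

Definition grid_set M F (y : pt R) := exists2 v, grid_code M F v & y = grid_pt M v.

Lemma grid_pt_inj M : (0 < M)%N -> injective (grid_pt M).
Proof.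
move=> M_gt0 v v' /(congr1 (fun y : pt R => fun k => y k * M%:R)) vv'.
apply: funext => k; have := congr1 (fun f => f k) vv'.
by rewrite /grid_pt !divfK ?pnatr_eq0 -?lt0n // => /eqP; rewrite eqr_nat => /eqP.
Qed.

Lemma grid_set_cube M F y : (0 < M)%N -> grid_set M F y -> cube y.
Proof.
move=> M_gt0 [v [v_le _] ->] k; rewrite /grid_pt divr_ge0 //=.
by rewrite ler_pdivrMr ?mul1r ?ler_nat ?ltr0n.
Qed.

Lemma grid_sqdist M v v' : (0 < M)%N ->
  \sum_(k < 4) (grid_pt M v k - grid_pt M v' k) ^+ 2 =
  (\sum_(k < 4) ((v k)%:R - (v' k)%:R) ^+ 2) / M%:R ^+ 2.
Proof.
move=> M_gt0; have M_neq0 : (M%:R : R) != 0 by rewrite pnatr_eq0 -lt0n.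
by rewrite mulr_suml; apply: eq_bigr => k _; rewrite /grid_pt; field.
Qed.

Lemma cube_sqdist M (y : pt R) v : (0 < M)%N ->
  \sum_(k < 4) (y k - grid_pt M v k) ^+ 2 = sqerr (fun k => y k * M%:R) v / M%:R ^+ 2.
Proof.
move=> M_gt0; have M_neq0 : (M%:R : R) != 0 by rewrite pnatr_eq0 -lt0n.
by rewrite /sqerr mulr_suml; apply: eq_bigr => k _; rewrite /grid_pt; field.
Qed.

Lemma grid_set_or M F G y :
  grid_set M (fun a b c d => F a b c d || G a b c d) y <-> grid_set M F y \/ grid_set M G y.
Proof.
split=> [[v [v_le /orP[Fv|Gv]] ->]|[[v [v_le Fv] ->]|[v [v_le Gv] ->]]].
- by left; exists v.
- by right; exists v.
- by exists v => //; split => //; apply/orP; left.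
- by exists v => //; split => //; apply/orP; right.
Qed.

Lemma grid_set_halve M y : (0 < M)%N ->
  grid_set (2 * M) level_pat y <-> grid_set M covered_pat y \/ grid_set M refine_pat y.
Proof.
move=> M_gt0; have M_neq0 : (M%:R : R) != 0 by rewrite pnatr_eq0 -lt0n.
have halve v : grid_pt (2 * M) (fun k => 2 * v k)%N = grid_pt M v.
  by apply: funext => k; rewrite /grid_pt !natrM; field.
split=> [[v [v_le lv] ->]|].
  have v_even k : v k = (2 * (v k %/ 2))%N.
    move: (level_code_even lv); rewrite /has_pattern /even_pat !odd_mod // => /and4P evens.
    by case: (ord4P k) evens => -> [? ? ? ?]; lia.
  pose u k := (v k %/ 2)%N; have u_le k : (u k <= M)%N by have := v_le k; rewrite /u; lia.
  have vu : v = (fun k => 2 * u k)%N by apply: funext.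
  move: lv; rewrite vu halve level_code_halve => /orP[cu|ru]; [left|right]; by exists u.
case=> [[v [v_le Fv] ->]|[v [v_le Fv] ->]]; rewrite -halve; exists (fun k => 2 * v k)%N => //;
  by split=> [k|]; [have := v_le k; lia | rewrite level_code_halve Fv ?orbT].
Qed.

Definition code4 M := ('I_M.+1 * 'I_M.+1 * 'I_M.+1 * 'I_M.+1)%type.

Definition code_of M (c : code4 M) : 'I_4 -> nat := fun k =>
  match val k with 0 => c.1.1.1 | 1 => c.1.1.2 | 2 => c.1.2 | _ => c.2 end.

Lemma code_of_inj M : injective (@code_of M).
Proof.
move=> [[[a b] c] d] [[[a' b'] c'] d'] E.
have := congr1 (fun f => f i0) E; have := congr1 (fun f => f i1) E.
have := congr1 (fun f => f i2) E; have := congr1 (fun f => f i3) E.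
by rewrite /code_of /= => /val_inj -> /val_inj -> /val_inj -> /val_inj ->.
Qed.

Lemma code_of_le M (c : code4 M) k : (code_of c k <= M)%N.
Proof. by rewrite /code_of; case: (val k) => [|[|[|]]] /=; rewrite -ltnS ltn_ord. Qed.

Definition pattern_codes M F : {set code4 M} := [set c | has_pattern F (code_of c)].

Definition grid_enum M F (t : 'I_#|pattern_codes M F|) : pt R :=
  grid_pt M (code_of (enum_val t)).

Arguments grid_enum : clear implicits.

Lemma grid_enum_code M F (t : 'I_#|pattern_codes M F|) : grid_code M F (code_of (enum_val t)).
Proof. by split=> [k|]; [exact: code_of_le | have := enum_valP t; rewrite inE]. Qed.

Lemma grid_enum_inj M F : (0 < M)%N -> injective (grid_enum M F).
Proof. by move=> M_gt0 t t' /(grid_pt_inj M_gt0) /code_of_inj /enum_val_inj. Qed.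

Lemma grid_enumP M F y : (exists t, grid_enum M F t = y) <-> grid_set M F y.
Proof.
split=> [[t <-]|[v [v_le Fv] ->]].
  by exists (code_of (enum_val t)); first exact: grid_enum_code.
pose c : code4 M := (inord (v i0), inord (v i1), inord (v i2), inord (v i3)).
have cv : code_of c = v.
  by apply: funext => k; rewrite /code_of /=; case: (ord4P k) => -> /=; rewrite inordK // ltnS.
have c_in : c \in pattern_codes M F by rewrite inE cv.
by exists (enum_rank_in c_in c); rewrite /grid_enum enum_rankK_in // cv.
Qed.

End GridEnumeration.

Arguments grid_enum : clear implicits.

Definition res_sum (N : nat) (g : nat -> nat) : nat := (N.+1 * g 0 + N * (g 1 + g 2 + g 3))%N.

Lemma sum_res (N : nat) (g : nat -> nat) : (\sum_(i < (4 * N).+1) g (i %% 4) = res_sum N g)%N.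
Proof.
rewrite /res_sum; elim: N => [|N IH]; first by rewrite big_ord_recr big_ord0 /= mod0n; lia.
rewrite (_ : (4 * N.+1).+1 = ((4 * N).+1).+4)%N; last by lia.
rewrite -(big_mkord xpredT (fun i => g (i %% 4)%N)).
rewrite big_nat_recr // big_nat_recr // big_nat_recr // big_nat_recr // big_mkord IH.
have -> : ((4 * N).+1 %% 4 = 1)%N by lia.
have -> : ((4 * N).+2 %% 4 = 2)%N by lia.
have -> : ((4 * N).+3 %% 4 = 3)%N by lia.
have -> : ((4 * N).+4 %% 4 = 0)%N by lia.
by rewrite /= !mulSn; lia.
Qed.

Lemma sum_pair (I J : finType) (G : I * J -> nat) :
  (\sum_(c : I * J) G c = \sum_(i : I) \sum_(j : J) G (i, j))%N.
Proof. by rewrite pair_bigA; apply: eq_bigr => -[i j]. Qed.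

Definition pattern_count (N : nat) (F : pattern) : nat :=
  res_sum N (fun a => res_sum N (fun b => res_sum N (fun c => res_sum N (F a b c)))).

Lemma card_pattern_codes (N : nat) (F : pattern) : #|pattern_codes (4 * N) F| = pattern_count N F.
Proof.
rewrite -sum1_card big_mkcond /=.
rewrite (eq_bigr (fun c : code4 (4 * N) => nat_of_bool (has_pattern F (code_of c)))); last first.
  by move=> c _; rewrite inE; case: (has_pattern _ _).
rewrite !sum_pair /code_of /pattern_count /=.
rewrite -sum_res; apply: eq_bigr => a _; rewrite -sum_res; apply: eq_bigr => b _.
by rewrite -sum_res; apply: eq_bigr => c _; rewrite -sum_res; apply: eq_bigr => d _.
Qed.

Lemma count_face N : pattern_count N face_pat = (6 * N ^ 2 * (N + 1) ^ 2)%N.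
Proof. by rewrite /pattern_count /res_sum /face_pat /even_pat /count2 /=; nia. Qed.

Lemma count_refine N : pattern_count N refine_pat =
  (4 * N * (N + 1) ^ 3 + 4 * N ^ 3 * (N + 1) + 16 * N ^ 4)%N.
Proof. by rewrite /pattern_count /res_sum /refine_pat /even_pat /odd_pat /count2 /=; nia. Qed.



Section GridPhase.
Variables (R : realType) (x : nat -> pt R) (k M : nat) (FB FH : pattern) (rho : nat) (r : R).
Hypotheses (x_greedy : greedy_seq x) (k_gt0 : (0 < k)%N) (M_gt0 : (0 < M)%N) (r_gt0 : 0 < r).
Hypothesis r_sq : r ^+ 2 = rho%:R / M%:R ^+ 2.
Hypothesis B_first : forall y, grid_set M FB y <-> exists i, (1 <= i <= k)%N /\ x i = y.
Hypothesis B_sep : separated x k r.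
Hypothesis checks : phase_checks FB FH rho.
Hypothesis cover : covering R M FB FH rho.

Let scale_le (a b : R) : (a / M%:R ^+ 2 <= b / M%:R ^+ 2) = (a <= b).
Proof. by rewrite ler_pM2r // invr_gt0 exprn_gt0 // ltr0n. Qed.

Let grid_far F F' v v' : sep_check F F' rho -> has_pattern F v -> has_pattern F' v' -> v <> v' ->
  r <= dist2 (grid_pt R M v) (grid_pt R M v').
Proof.
move=> chk Fv Fv' vv'; rewrite dist2_geE ?(ltW r_gt0) // r_sq grid_sqdist //.
rewrite scale_le.
exact: sep_checkP chk Fv Fv' vv'.
Qed.

Let scaled_range (y : pt R) : cube y -> forall i, 0 <= y i * M%:R <= M%:R.
Proof.
move=> cy i; have /andP[y0 y1] := cy i; rewrite mulr_ge0 //=.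
by rewrite -[leRHS]mul1r ler_wpM2r.
Qed.

Lemma grid_phase :
  [/\ forall j, (j < #|pattern_codes M FH|)%N -> CR x (k + j) = r,
      forall j, (0 < j <= #|pattern_codes M FH|)%N -> SR x (k + j) = r / 2,
      separated x (k + #|pattern_codes M FH|) r &
      forall y, grid_set M FB y \/ grid_set M FH y <->
        exists i, (1 <= i <= k + #|pattern_codes M FH|)%N /\ x i = y].
Proof.
have [chk_HB chk_HH chk_disj] := and3P checks.
pose h := grid_enum R M FH.
have h_inj : injective h by exact: grid_enum_inj.
have h_cube t : cube (h t) by apply: grid_set_cube M_gt0 _; apply/grid_enumP; exists t.
have h_far_B t b : grid_set M FB b -> r <= dist2 (h t) b.
  move=> [v [_ Fv] ->]; have [_ Ft] := grid_enum_code t.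
  apply: (grid_far chk_HB Ft Fv) => tv.
  by have := disjoint_patP chk_disj Ft; rewrite tv Fv.
have h_sep t t' : t <> t' -> r <= dist2 (h t) (h t').
  move=> tt'; apply: grid_far chk_HH (grid_enum_code t).2 (grid_enum_code t').2 _.
  by move=> /code_of_inj /enum_val_inj.
have B_covers y : cube y -> exists b, grid_set M FB b /\ dist2 y b <= r.
  move=> cy; have [[v v_code v_err] _] := cover (scaled_range cy).
  exists (grid_pt R M v); split; first by exists v.
  by rewrite dist2_leE ?(ltW r_gt0) // cube_sqdist // r_sq scale_le.
have far_B_in_h y : cube y -> (forall b, grid_set M FB b -> r <= dist2 y b) -> exists t, h t = y.
  move=> cy far; have [_ deep] := cover (scaled_range cy).
  have [|w w_code yw] := deep => [v v_code|].
    have := far _ (ex_intro2 _ _ v v_code erefl).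
    by rewrite dist2_geE ?(ltW r_gt0) // cube_sqdist // r_sq scale_le.
  apply/grid_enumP; exists w => //; apply: funext => k'.
  by rewrite /grid_pt -yw mulrK // unitfE pnatr_eq0 -lt0n.
have [CR_j SR_j sep_L points] := greedy_phase x_greedy k_gt0 r_gt0 B_first B_sep h_inj h_cube
  h_far_B h_sep B_covers far_B_in_h.
split=> // y; rewrite -points.
by split=> -[?|/grid_enumP ?]; [left | right | left | right].
Qed.

End GridPhase.

Section Levels.
Variables (R : realType) (x : nat -> pt R).
Hypothesis x_greedy : greedy_seq x.

Definition mesh m := (4 * 2 ^ m)%N.
Definition face_radius m : R := gamma R m * Num.sqrt 2 / 2.
Definition refine_radius m : R := gamma R m / 2.

Let sqrt2_sq : Num.sqrt 2 ^+ 2 = 2 :> R.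
Proof. by rewrite sqr_sqrtr // ler0n. Qed.

Let sqrt2_gt0 : 0 < Num.sqrt 2 :> R.
Proof. by rewrite sqrtr_gt0 ltr0n. Qed.

Let sqrt2_bounds : (1 : R) <= Num.sqrt 2 <= (2 : R).
Proof. by move: sqrt2_sq sqrt2_gt0; rewrite expr2 => ? ?; apply/andP; split; nra. Qed.

Let gamma_gt0 m : 0 < gamma R m.
Proof. by rewrite invr_gt0 exprn_gt0. Qed.

Let gamma_neq0 m : gamma R m != 0.
Proof. by rewrite gt_eqF. Qed.

Let gammaS m : gamma R m.+1 = gamma R m / 2.
Proof. by rewrite /gamma exprS invfM mulrC. Qed.

Let mesh_gt0 m : (0 < mesh m)%N.
Proof. by rewrite muln_gt0 expn_gt0. Qed.

Let mesh_R m : (mesh m)%:R = 4 / gamma R m :> R.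
Proof. by rewrite /gamma invrK /mesh natrM natrX. Qed.

Let face_radius_sq m : face_radius m ^+ 2 = 8%:R / (mesh m)%:R ^+ 2.
Proof.
rewrite mesh_R /face_radius; have g0 := gamma_neq0 m.
have -> : (gamma R m * Num.sqrt 2 / 2) ^+ 2 = gamma R m ^+ 2 * Num.sqrt 2 ^+ 2 / 4 by field.
by rewrite sqrt2_sq; field.
Qed.

Let refine_radius_sq m : refine_radius m ^+ 2 = 4%:R / (mesh m)%:R ^+ 2.
Proof. by rewrite mesh_R /refine_radius; have g0 := gamma_neq0 m; field. Qed.

Let face_radius_gt0 m : 0 < face_radius m.
Proof. by rewrite /face_radius divr_gt0 // mulr_gt0. Qed.

Let refine_radius_gt0 m : 0 < refine_radius m.
Proof. by rewrite /refine_radius divr_gt0. Qed.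

Let refine_le_face m : refine_radius m <= face_radius m.
Proof.
by rewrite /refine_radius /face_radius; have := gamma_gt0 m; have /andP[? ?] := sqrt2_bounds; nra.
Qed.

Let faceS_le_refine m : face_radius m.+1 <= refine_radius m.
Proof.
rewrite /refine_radius /face_radius gammaS; have := gamma_gt0 m.
by have /andP[? ?] := sqrt2_bounds; nra.
Qed.

Definition level_inv m :=
  [/\ forall y, grid_set (mesh m) level_pat y <-> exists i, (1 <= i <= n_ m)%N /\ x i = y,
      separated x (n_ m) (face_radius m) & SR x (n_ m) = gamma R m / 2].

Lemma level_inv0 : level_inv 0.
Proof.
have centre_code v : grid_code 4 centre_pat v -> v = (fun=> 2%N).
  move=> [v_le /and4P[/eqP ? /eqP ? /eqP ? /eqP ?]]; apply: funext => k.
  by have := v_le k; case: (ord4P k) => ->; lia.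
have centre_pt : grid_pt R 4 (fun=> 2%N) = centre R.
  by apply: funext => k; rewrite /grid_pt /centre; field.
have centre_first y : grid_set 4 centre_pat y <-> exists i, (1 <= i <= 1)%N /\ x i = y.
  split=> [[v /centre_code -> ->]|[i [i1 <-]]]; first by exists 1%N; rewrite x_greedy.1.
  have -> : i = 1%N by lia.
  by rewrite x_greedy.1 -centre_pt; exists (fun=> 2%N).
have single_sep : separated x 1 1 by move=> i j ? ? ?; lia.
have unit_sq : (1 : R) ^+ 2 = 16%:R / 4%:R ^+ 2 by rewrite expr1n; field.
have [_ SR_j sep_L points] := grid_phase x_greedy (isT : (0 < 1)%N) (isT : (0 < 4)%N) ltr01
  unit_sq centre_first single_sep corner_phase_checks (@corner_covering R).
have n0 : n_ 0 = (1 + #|pattern_codes 4 corner_pat|)%N by rewrite (card_pattern_codes 1).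
rewrite /level_inv n0; split.
- move=> y; rewrite -points; apply: iff_trans (grid_set_or 4 corner_pat centre_pat y) _; tauto.
- apply: separated_le sep_L; rewrite /face_radius /gamma expr0 invr1 mul1r.
  by have := sqrt2_bounds; lra.
- by rewrite SR_j ?(card_pattern_codes 1) // /gamma expr0 invr1.
Qed.

Let pow2_gt0 m : (0 < 2 ^ m)%N.
Proof. by rewrite expn_gt0. Qed.

Let n_gt0 m : (0 < n_ m)%N.
Proof. by rewrite /n_ addn_gt0 expn_gt0 addn1. Qed.

Lemma face_phase m : level_inv m ->
  [/\ forall n, (n_ m <= n < n_ m + l_ m)%N -> CR x n = face_radius m,
      forall n, (n_ m < n <= n_ m + l_ m)%N -> SR x n = face_radius m / 2,
      separated x (n_ m + l_ m) (refine_radius m) &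
      forall y, grid_set (mesh m) covered_pat y <->
        exists i, (1 <= i <= n_ m + l_ m)%N /\ x i = y].
Proof.
move=> [level_first level_sep _].
have count : #|pattern_codes (mesh m) face_pat| = l_ m.
  by rewrite /mesh card_pattern_codes count_face /l_ -expnM (mulnC m 2).
have [CR_j SR_j sep_L points] := grid_phase x_greedy (n_gt0 m) (mesh_gt0 m)
  (face_radius_gt0 m) (face_radius_sq m) level_first level_sep face_phase_checks
  (face_covering (pow2_gt0 m)).
rewrite count in CR_j SR_j sep_L points; split.
- by move=> n n_range; rewrite -(subnKC (_ : n_ m <= n)%N) ?CR_j //; lia.
- by move=> n n_range; rewrite -(subnKC (_ : n_ m <= n)%N) ?SR_j //; lia.
- exact: separated_le (refine_le_face m) sep_L.
- by move=> y; rewrite -points; exact: grid_set_or.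
Qed.

Let refine_count m :
  (n_ m + l_ m + #|pattern_codes (mesh m) refine_pat| = n_ m.+1)%N.
Proof.
rewrite /mesh card_pattern_codes count_refine /n_ /l_ (mulnC 2%N m) (mulnC 4%N m).
by rewrite (mulnC 4%N m.+1) !expnM (expnS 2 m); move: (2 ^ m)%N => N; ring.
Qed.

Let refine_count_gt0 m : (0 < #|pattern_codes (mesh m) refine_pat|)%N.
Proof. by rewrite /mesh card_pattern_codes count_refine; have := pow2_gt0 m; nia. Qed.

Lemma refine_phase m : level_inv m ->
  [/\ forall n, (n_ m + l_ m <= n < n_ m.+1)%N -> CR x n = refine_radius m,
      forall n, (n_ m + l_ m < n <= n_ m.+1)%N -> SR x n = refine_radius m / 2
    & level_inv m.+1].
Proof.
move=> inv_m; have [_ _ face_sep face_points] := face_phase inv_m.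
have count := refine_count m.
have k_gt0 : (0 < n_ m + l_ m)%N by have := n_gt0 m; lia.
have [CR_j SR_j sep_L points] := grid_phase x_greedy k_gt0 (mesh_gt0 m)
  (refine_radius_gt0 m) (refine_radius_sq m) face_points face_sep refine_phase_checks
  (refine_covering (pow2_gt0 m)).
rewrite count in CR_j SR_j sep_L points; split.
- by move=> n n_range; rewrite -(subnKC (_ : n_ m + l_ m <= n)%N) ?CR_j //; lia.
- by move=> n n_range; rewrite -(subnKC (_ : n_ m + l_ m <= n)%N) ?SR_j //; lia.
split.
- move=> y; rewrite -points (_ : mesh m.+1 = 2 * mesh m)%N; last by rewrite /mesh expnS; lia.
  exact: grid_set_halve.
- exact: separated_le (faceS_le_refine m) sep_L.
- rewrite -count SR_j; last by have := refine_count_gt0 m; lia.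
  by rewrite /refine_radius gammaS.
Qed.

Let l_gt0 m : (0 < l_ m)%N.
Proof. by rewrite /l_ !muln_gt0 !expn_gt0 addn1. Qed.

Let faces_before_next m : (n_ m + l_ m < n_ m.+1)%N.
Proof. by have := refine_count m; have := refine_count_gt0 m; lia. Qed.

Let half_face_radius m : face_radius m / 2 = gamma R m / (2 * Num.sqrt 2).
Proof.
have g0 := gamma_neq0 m; have s0 : Num.sqrt 2 != 0 :> R by rewrite gt_eqF.
have -> : gamma R m / (2 * Num.sqrt 2) = gamma R m * Num.sqrt 2 / (2 * Num.sqrt 2 ^+ 2).
  by field.
by rewrite sqrt2_sq /face_radius; field.
Qed.

Lemma radii_at_level m : level_inv m ->
  SR x (n_ m) = gamma R m / 2 /\
  CR x (n_ m) = gamma R m * Num.sqrt 2 / 2 /\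
  MR x (n_ m) = Num.sqrt 2.
Proof.
move=> inv_m; have [_ _ SR_m] := inv_m; have [face_CR _ _ _] := face_phase inv_m.
have g0 := gamma_neq0 m; rewrite /MR SR_m face_CR; last by have := l_gt0 m; lia.
by split=> //; split=> //; rewrite /face_radius; field.
Qed.

Lemma radii_in_face_phase m n : level_inv m -> (n_ m < n < n_ m + l_ m)%N ->
  SR x n = gamma R m / (2 * Num.sqrt 2) /\
  CR x n = gamma R m * Num.sqrt 2 / 2 /\
  MR x n = 2.
Proof.
move=> inv_m n_range; have [face_CR face_SR _ _] := face_phase inv_m.
rewrite /MR face_CR ?face_SR; try lia.
have f0 : face_radius m != 0 by rewrite gt_eqF.
by split; [exact: half_face_radius | split=> //; field].
Qed.

Lemma radii_after_face_phase m : level_inv m ->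
  SR x (n_ m + l_ m) = gamma R m / (2 * Num.sqrt 2) /\
  CR x (n_ m + l_ m) = gamma R m / 2 /\
  MR x (n_ m + l_ m) = Num.sqrt 2.
Proof.
move=> inv_m; have [_ face_SR _ _] := face_phase inv_m; have [refine_CR _ _] := refine_phase inv_m.
have g0 := gamma_neq0 m; have s0 : Num.sqrt 2 != 0 :> R by rewrite gt_eqF.
rewrite /MR face_SR ?refine_CR ?half_face_radius; try (have := faces_before_next m; have := l_gt0 m; lia).
by rewrite /refine_radius; split=> //; split=> //; field; apply/andP.
Qed.

Lemma radii_in_refine_phase m n : level_inv m -> (n_ m + l_ m < n < n_ m.+1)%N ->
  SR x n = gamma R m / 4 /\
  CR x n = gamma R m / 2 /\
  MR x n = 2.
Proof.
move=> inv_m n_range; have [refine_CR refine_SR _] := refine_phase inv_m.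
have g0 := gamma_neq0 m; rewrite /MR refine_CR ?refine_SR; try lia.
by rewrite /refine_radius; split; [field | split=> //; field].
Qed.

End Levels.

Unset Implicit Arguments.

Theorem theorem4 (R : realType) (x : nat -> pt R) (m : nat) :
  greedy_seq x ->
  [/\ (SR x (n_ m) = gamma R m / 2 /\
       CR x (n_ m) = gamma R m * Num.sqrt 2 / 2 /\
       MR x (n_ m) = Num.sqrt 2),
      (forall n, (n_ m < n < n_ m + l_ m)%N ->
         SR x n = gamma R m / (2 * Num.sqrt 2) /\
         CR x n = gamma R m * Num.sqrt 2 / 2 /\
         MR x n = 2),
      (SR x (n_ m + l_ m) = gamma R m / (2 * Num.sqrt 2) /\
       CR x (n_ m + l_ m) = gamma R m / 2 /\
       MR x (n_ m + l_ m) = Num.sqrt 2)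
    & (forall n, (n_ m + l_ m < n < n_ m.+1)%N ->
         SR x n = gamma R m / 4 /\
         CR x n = gamma R m / 2 /\
         MR x n = 2)].
Proof.
move=> x_greedy.
have inv_m : level_inv x m.
  elim: m => [|m inv_m]; first exact: level_inv0.
  by have [_ _] := refine_phase x_greedy inv_m.
split; [exact: radii_at_level | move=> n; exact: radii_in_face_phase |
        exact: radii_after_face_phase | move=> n; exact: radii_in_refine_phase].
Qed.
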